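(* Let $(P_t)_{t\in\mathbb{R}_+}$ be a stochastically monotone Feller semigroup on $\mathbb{R}$, and define Markov kernels $\tilde{P}_t$ on $\overline{\mathbb{R}}$ by $\tilde{P}_t(x,B)=P_t(x,B\cap\mathbb{R})$ for $x\in\mathbb{R}$, $\tilde{P}_t(+\infty,\cdot)=\delta_{+\infty}$ and $\tilde{P}_t(-\infty,\cdot)=\delta_{-\infty}$. Then $(\tilde{P}_t)_{t\ge0}$ is a Feller semigroup on $\overline{\mathbb{R}}$: for every $t\ge0$ and every continuous $f:\overline{\mathbb{R}}\to\mathbb{R}$, $\tilde{P}_tf$ is continuous on $\overline{\mathbb{R}}$, and $\lim_{t\to0^+}\sup_{x\in\overline{\mathbb{R}}}|\tilde{P}_tf(x)-f(x)|=0$.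
   Context: $\overline{\mathbb{R}}=[-\infty,+\infty]$ with metric $d_1(x,y)=|\tanh y-\tanh x|$, a compact metric space. A Markov semigroup $(P_t)$ ($P_0(x,\cdot)=\delta_x$, $P_{s+t}=P_sP_t$) on $\mathbb{R}$ is Feller if $P_tf\in\mathcal{C}_0(\mathbb{R})$ for $f\in\mathcal{C}_0(\mathbb{R})$ (continuous, vanishing at $\pm\infty$) and $\sup_x|P_tf(x)-f(x)|\to0$ as $t\to0^+$; it is stochastically monotone if $P_tf$ is non-decreasing whenever $f$ is bounded, Borel and non-decreasing. *)

From HB Require Import structures.
From mathcomp Require Import all_boot all_order all_algebra.
From mathcomp Require Import all_classical all_reals all_analysis measurable_realfun.
Import Order.TTheory GRing.Theory Num.Theory numFieldNormedType.Exports.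

Set Implicit Arguments.
Unset Strict Implicit.
Unset Printing Implicit Defensive.

Local Open Scope classical_set_scope.
Local Open Scope ring_scope.

(* A family of Markov (probability) kernels on R indexed by time t : R
   (only t >= 0 is relevant). *)
Notation kfamily R := (R -> R.-pker R ~> R).

Definition Pact (R : realType) (P : kfamily R) (t : R) (f : R -> R) (x : R) : R :=
  fine (\int[P t x]_y (f y)%:E)%E.

Definition C0 (R : realType) (f : R -> R) : Prop :=
  continuous f /\ f x @[x --> +oo] --> 0 /\ f x @[x --> -oo] --> 0.

Definition markov_semigroup (R : realType) (P : kfamily R) : Prop :=
  (forall x (A : set R), measurable A -> P 0 x A = \d_x A) /\
  (forall s t, 0 <= s -> 0 <= t -> forall x (A : set R), measurable A ->
     P (s + t) x A = (\int[P s x]_y P t y A)%E).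

Definition feller (R : realType) (P : kfamily R) : Prop :=
  (forall t, 0 <= t -> forall f, C0 f -> C0 (Pact P t f)) /\
  (forall f, C0 f -> forall e : R, 0 < e ->
     \forall t \near 0^'+, forall x, `|Pact P t f x - f x| <= e).

Definition stoch_monotone (R : realType) (P : kfamily R) : Prop :=
  forall t, 0 <= t -> forall f : R -> R,
    (exists M : R, forall x, `|f x| <= M) -> measurable_fun setT f ->
    {homo f : x y / x <= y} -> {homo Pact P t f : x y / x <= y}.

Definition pushEFin (R : realType) (mu : {measure set R -> \bar R})
  : {measure set \bar R -> \bar R}.
Proof.
refine (pushforward mu (@EFin R) : {measure set \bar R -> \bar R}).
exact: EFin_measurable.
Defined.

Definition Ptilde (R : realType) (P : kfamily R) (t : R) (x : \bar R)
  : {measure set \bar R -> \bar R} :=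
  match x with
  | EFin r => pushEFin (P t r)
  | +oo%E => \d_(+oo%E : \bar R)
  | -oo%E => \d_(-oo%E : \bar R)
  end.

Definition Ptilde_act (R : realType) (P : kfamily R) (t : R) (f : \bar R -> R)
  (x : \bar R) : R :=
  fine (\int[Ptilde P t x]_y (f y)%:E)%E.

From HB Require Import structures.
From mathcomp Require Import all_boot all_order all_algebra.
From mathcomp Require Import all_classical all_reals all_analysis measurable_realfun.
From mathcomp Require Import ring lra.
Import Order.TTheory GRing.Theory Num.Theory numFieldNormedType.Exports.
Local Open Scope classical_set_scope.
Local Open Scope ring_scope.

(* On R, a continuous f on the extended line splits as
   f(-oo) + (f(+oo) - f(-oo)) * r + h, where r = ramp 0 climbs from 0 to 1 on [0, 1]
   and h vanishes at +oo and -oo.  The Feller property on R controls P_t h, so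
   everything reduces to the single function P_t r.  Differences of ramps lie in
   C_0(R), stochastic monotonicity makes P_t r nondecreasing, and each P_t(x, .) is
   tight; together these give continuity of P_t r, its limits 1 at +oo and 0 at -oo,
   and uniform convergence of P_t r to r as t -> 0+.  At +oo and -oo the kernels
   are Dirac masses, so there P~_t f = f. *)

Section ramp.
Context {R : realType}.

Definition ramp (c y : R) : R := Num.min 1 (Num.max 0 (y - c)).

Ltac unfold_ramp := rewrite /ramp !minEle !maxEle; do !case: ifPn.

Lemma ramp_ge0 c y : 0 <= ramp c y.
Proof. unfold_ramp; lra. Qed.

Lemma ramp_le1 c y : ramp c y <= 1.
Proof. unfold_ramp; lra. Qed.

Lemma normr_ramp_le1 c y : `|ramp c y| <= 1.
Proof. by rewrite ger0_norm ?ramp_ge0 ?ramp_le1. Qed.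

Lemma ramp_eq0 c y : y <= c -> ramp c y = 0.
Proof. unfold_ramp; lra. Qed.

Lemma ramp_eq1 c y : c + 1 <= y -> ramp c y = 1.
Proof. unfold_ramp; lra. Qed.

Lemma ramp_nondecreasing c : {homo ramp c : x y / x <= y}.
Proof. move=> x y; unfold_ramp; lra. Qed.

Lemma continuous_ramp c : continuous (ramp c).
Proof.
move=> x; apply: (@continuous_min _ _ (cst 1) (fun y => Num.max 0 (y - c))).
  exact: cst_continuous.
apply: (@continuous_max _ _ (cst 0) (fun y => y - c)); first exact: cst_continuous.
by apply: (@continuousB _ R^o _ id (cst c)); [exact: cvg_id|exact: cst_continuous].
Qed.

Lemma measurable_ramp c : measurable_fun setT (ramp c).
Proof. exact: continuous_measurable_fun (continuous_ramp c). Qed.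

Lemma C0_eventually0 (h : R -> R) :
  continuous h -> (exists K, forall y, K < `|y| -> h y = 0) -> C0 h.
Proof.
move=> ch [K hK]; split=> //; split; apply: cvg_near_cst.
  by exists K; split=> [|y Ky]; rewrite ?num_real// hK// (lt_le_trans Ky (ler_norm y)).
exists (- K); split=> [|y Ky]; first by rewrite num_real.
by rewrite hK// -normrN (lt_le_trans _ (ler_norm _))// ltrNr.
Qed.

Lemma C0_rampB c d : c <= d -> C0 (fun y => ramp c y - ramp d y).
Proof.
move=> cd; apply: C0_eventually0.
  by move=> y; apply: continuousB; exact: continuous_ramp.
exists (`|c| + `|d| + 1) => y; rewrite ltr_normr => /orP[] Ky.
  by rewrite !ramp_eq1 ?subrr//; move: Ky; have := normr_ge0 c; have := ler_norm d; lra.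
rewrite !ramp_eq0 ?subrr//; move: Ky; have := normr_ge0 d;
  have := ler_norm (- c); rewrite normrN; lra.
Qed.

End ramp.

Section ereal_functions.
Context {R : realType}.

Lemma continuous_erealP (F : \bar R -> R) : continuous F <->
  [/\ continuous (fun x => F x%:E), F x%:E @[x --> +oo] --> F +oo%E
    & F x%:E @[x --> -oo] --> F -oo%E].
Proof.
split=> [cF|[cF cFy cFNy]].
  split=> [r|A FA|A FA]; first exact: cF.
    by have /nbhs_ereal_pinfty[] := cF +oo%E A FA.
  by have /nbhs_ereal_ninfty[] := cF -oo%E A FA.
case=> [r|A FA|A FA]; first exact: cF.
  by apply/nbhs_ereal_pinfty; split; [exact: nbhs_singleton FA|exact: cFy].
by apply/nbhs_ereal_ninfty; split; [exact: nbhs_singleton FA|exact: cFNy].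
Qed.

Lemma measurable_fun_ereal d (T : measurableType d) (F : \bar R -> T) :
  measurable_fun setT (F \o EFin) -> measurable_fun setT F.
Proof.
move=> mF _ B mB; rewrite setTI.
have -> : F @^-1` B = EFin @` ((F \o EFin) @^-1` B) `|`
    (F @^-1` B `&` [set +oo%E]) `|` (F @^-1` B `&` [set -oo%E]).
  apply/seteqP; split=> [[r| |] Bx|x [[[r Br <-]|[]]|[]]] //.
  - by left; left; exists r.
  - by left; right.
  - by right.
have mpt (z : \bar R) : measurable (F @^-1` B `&` [set z]).
  have [Bz|Bz] := pselect (B (F z)).
    rewrite (_ : _ `&` _ = [set z]) ?emeasurable_set1//.
    by apply/seteqP; split=> [x []|x ->].
  rewrite (_ : _ `&` _ = set0)//.
  by apply/seteqP; split=> [x [Bx xz]|]//; apply: Bz; rewrite -xz.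
apply: measurableU; [apply: measurableU|]; rewrite ?mpt//.
by apply: measurable_image_EFin; rewrite -[_ @^-1` _]setTI; exact: mF.
Qed.

Lemma measurable_continuous_ereal (f : \bar R -> R) :
  continuous f -> measurable_fun setT f.
Proof.
move/continuous_erealP => [cf _ _]; apply: measurable_fun_ereal.
exact: continuous_measurable_fun.
Qed.

Lemma bounded_continuous_cvg (g : R -> R) (a b : R) : continuous g ->
  g x @[x --> +oo] --> a -> g x @[x --> -oo] --> b -> exists M, forall x, `|g x| <= M.
Proof.
move=> cg /(cvg_bounded _ _)/ex_bound[M1 [K1 [_ gM1]]].
move=> /(cvg_bounded _ _)/ex_bound[M2 [K2 [_ gM2]]].
have cK : compact (g @` `[K2, K1]).
  apply: continuous_compact; first exact: continuous_subspaceT.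
  exact: segment_compact.
have [M3 [_ /(_ (M3 + 1))]] := compact_bounded cK.
rewrite ltrDl ltr01 => /(_ isT) gM3.
exists (Num.max M1 (Num.max M2 (M3 + 1))) => x; rewrite !le_max.
have [K1x|xK1] := ltP K1 x; first by rewrite gM1.
have [xK2|K2x] := ltP x K2; first by rewrite gM2 ?orbT.
by rewrite gM3 ?orbT//; exists x => //=; rewrite in_itv/= K2x xK1.
Qed.

Lemma bounded_continuous_ereal (f : \bar R -> R) :
  continuous f -> exists M, forall y : R, `|f y%:E| <= M.
Proof.
by move/continuous_erealP => [cf cfy cfNy]; exact: bounded_continuous_cvg cf cfy cfNy.
Qed.

End ereal_functions.

Section ramp_interp.
Context {R : realType}.

Definition ramp_interp (f : \bar R -> R) (y : R) : R :=
  f -oo%E + (f +oo%E - f -oo%E) * ramp 0 y.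

Lemma continuous_ramp_interp f : continuous (ramp_interp f).
Proof.
move=> y; set c := f +oo%E - f -oo%E.
apply: (@continuousD _ R^o _ (cst (f -oo%E)) (fun y => c * ramp 0 y)).
  exact: cst_continuous.
apply: (@continuousM _ _ (cst c) (ramp 0)); first exact: cst_continuous.
exact: continuous_ramp.
Qed.

Lemma measurable_ramp_interp f : measurable_fun setT (ramp_interp f).
Proof. exact: continuous_measurable_fun (continuous_ramp_interp f). Qed.

Lemma C0_sub_ramp_interp f : continuous f -> C0 (fun y => f y%:E - ramp_interp f y).
Proof.
move/continuous_erealP => [cf cfy cfNy]; split; [|split].
- by move=> y; apply: continuousB; [exact: cf | exact: continuous_ramp_interp].
- rewrite -(subrr (f +oo%E)); apply: cvgB cfy _; apply: cvg_near_cst.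
  near=> y; rewrite /ramp_interp ramp_eq1; first by rewrite mulr1 addrC subrK.
  by rewrite add0r; near: y; apply: nbhs_pinfty_ge; rewrite num_real.
- rewrite -(subrr (f -oo%E)); apply: cvgB cfNy _; apply: cvg_near_cst.
  near=> y; rewrite /ramp_interp ramp_eq0; first by rewrite mulr0 addr0.
  by near: y; apply: nbhs_ninfty_le; rewrite num_real.
Unshelve. all: by end_near. Qed.

End ramp_interp.

Section probability_Rintegral.
Context {d} {T : measurableType d} {R : realType} {mu : {measure set T -> \bar R}}.
Hypothesis mu_setT : mu setT = 1%E.

Lemma bounded_integrable (f : T -> R) :
  measurable_fun setT f -> (exists M, forall x, `|f x| <= M) ->
  mu.-integrable setT (EFin \o f).
Proof.
move=> mf [M fM]; apply: measurable_bounded_integrable => //.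
  by rewrite mu_setT ltry.
exists M; split=> [|N MN x _]; first by rewrite num_real.
exact: le_trans (fM x) (ltW MN).
Qed.

Lemma Rintegral_cst1 (c : R) : \int[mu]_x c = c.
Proof. by rewrite Rintegral_cst// mu_setT mulr1. Qed.

Lemma bounded_cvg_Rintegral (u : nat -> T -> R) (v : T -> R) (M : R) :
  (forall n, measurable_fun setT (u n)) -> measurable_fun setT v ->
  (forall n x, `|u n x| <= M) -> (forall x, u n x @[n --> \oo] --> v x) ->
  \int[mu]_x u n x @[n --> \oo] --> \int[mu]_x v x.
Proof.
move=> mu_ mv uM uv.
have mEu n : measurable_fun setT (EFin \o u n) by exact/measurable_EFinP.
have Euv x : setT x -> (u n x)%:E @[n --> \oo] --> (v x)%:E.
  by move=> _; apply: cvg_EFin; [exact: nearW | exact: uv].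
have EuM x n : setT x -> (`|(u n x)%:E| <= (cst M x)%:E)%E by move=> _; exact: uM.
have iM : mu.-integrable setT (EFin \o cst M).
  by apply: bounded_integrable; [exact: measurable_cst | exists `|M|].
have [iv _ Iuv] := dominated_convergence measurableT mEu
  ((measurable_EFinP _ _).2 mv) (aeW _ Euv) iM (aeW _ EuM).
have Ifin : (\int[mu]_x (v x)%:E)%E \is a fin_num by exact: integrable_fin_num.
by rewrite -(fineK Ifin) in Iuv; exact: fine_cvg Iuv.
Qed.

End probability_Rintegral.

Section ramp_Rintegral.
Context {R : realType} {mu : {measure set R -> \bar R}}.
Hypothesis mu_setT : mu setT = 1%E.

Lemma integrable_ramp c : mu.-integrable setT (EFin \o ramp c).
Proof.
apply: bounded_integrable => //; first exact: measurable_ramp.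
by exists 1; exact: normr_ramp_le1.
Qed.

Lemma integrable_ramp_interp f : mu.-integrable setT (EFin \o ramp_interp f).
Proof.
apply: bounded_integrable => //; first exact: measurable_ramp_interp.
exists (`|f -oo%E| + `|f +oo%E - f -oo%E|) => y; rewrite /ramp_interp.
by rewrite (le_trans (ler_normD _ _))// lerD2l normrM ler_piMr ?normr_ramp_le1.
Qed.

Lemma Rintegral_ramp_cvg (c : nat -> R) (v : R) :
  (forall y, ramp (c n) y @[n --> \oo] --> v) ->
  \int[mu]_y ramp (c n) y @[n --> \oo] --> v.
Proof.
move=> cv; rewrite -[v in _ --> v](Rintegral_cst1 mu_setT).
apply: (bounded_cvg_Rintegral mu_setT _ _ 1) => //.
- by move=> n; exact: measurable_ramp.
- by move=> n; exact: normr_ramp_le1.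
Qed.

Lemma Rintegral_ramp_cvg0 : \int[mu]_y ramp n%:R y @[n --> \oo] --> 0.
Proof.
apply: Rintegral_ramp_cvg => y; apply: cvg_near_cst.
by near=> n; apply: ramp_eq0; near: n; exact: nbhs_infty_ger.
Unshelve. all: by end_near. Qed.

Lemma Rintegral_rampN_cvg1 : \int[mu]_y ramp (- n%:R) y @[n --> \oo] --> (1 : R).
Proof.
apply: Rintegral_ramp_cvg => y; apply: cvg_near_cst.
near=> n; apply: ramp_eq1.
suff : 1 - y <= n%:R by lra.
by near: n; exact: nbhs_infty_ger.
Unshelve. all: by end_near. Qed.

End ramp_Rintegral.

Section Pact_ramp.
Context {R : realType} {P : R -> R.-pker R ~> R}.

Let P_setT t x : P t x setT = 1%E := prob_kernel x.

Let PactE t f x : Pact P t f x = \int[P t x]_y f y.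
Proof. by []. Qed.

Lemma Pact_cst t c x : Pact P t (fun=> c) x = c.
Proof. by rewrite PactE Rintegral_cst1. Qed.

Lemma Pact_ramp_ge0 t c x : 0 <= Pact P t (ramp c) x.
Proof. by rewrite PactE; apply: Rintegral_ge0 => y _; exact: ramp_ge0. Qed.

Lemma Pact_ramp_le1 t c x : Pact P t (ramp c) x <= 1.
Proof.
rewrite -(Pact_cst t 1 x) !PactE; apply: le_Rintegral => //.
- exact: integrable_ramp.
- by apply: bounded_integrable => //; exists 1 => _; rewrite normr1.
- by move=> y _; exact: ramp_le1.
Qed.

Lemma PactB t f g x :
  (P t x).-integrable setT (EFin \o f) -> (P t x).-integrable setT (EFin \o g) ->
  Pact P t (fun y => f y - g y) x = Pact P t f x - Pact P t g x.
Proof. by move=> if_ ig; rewrite !PactE RintegralB. Qed.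

Lemma Pact_ramp_interp t f x :
  Pact P t (ramp_interp f) x = f -oo%E + (f +oo%E - f -oo%E) * Pact P t (ramp 0) x.
Proof.
rewrite !PactE /ramp_interp RintegralD//; last first.
- set c := f +oo%E - f -oo%E.
  apply: (eq_integrable measurableT (fun y => c%:E * (ramp 0 y)%:E)%E) => //.
  by apply: integrableZl => //; exact: integrable_ramp.
- by apply: bounded_integrable => //; exists `|f -oo%E|.
by rewrite Rintegral_cst1// RintegralZl//; exact: integrable_ramp.
Qed.

Lemma Pact_rampB t c d x :
  Pact P t (fun y => ramp c y - ramp d y) x = Pact P t (ramp c) x - Pact P t (ramp d) x.
Proof. by rewrite PactB//; exact: integrable_ramp. Qed.

Section monotone.
Hypothesis hM : stoch_monotone P.

Lemma Pact_ramp_nondecreasing t c : 0 <= t -> {homo Pact P t (ramp c) : x y / x <= y}.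
Proof.
move=> t0; apply: hM => //; last exact: ramp_nondecreasing.
- by exists 1; exact: normr_ramp_le1.
- exact: measurable_ramp.
Qed.

Lemma near_oo_Pact_ramp_le t x0 e : 0 <= t -> 0 < e ->
  \forall n \near \oo, forall x, x <= x0 -> Pact P t (ramp n%:R) x <= e.
Proof.
move=> t0 e0.
have cvg0 : \int[P t x0]_y ramp n%:R y @[n --> \oo] --> 0 by exact: Rintegral_ramp_cvg0.
move/cvgrPdist_le : cvg0 => /(_ e e0); apply: filterS => n + x xx0.
rewrite sub0r normrN ger0_norm; last exact: Pact_ramp_ge0.
exact/le_trans/Pact_ramp_nondecreasing.
Qed.

Lemma near_oo_Pact_rampN_ge t x0 e : 0 <= t -> 0 < e ->
  \forall n \near \oo, forall x, x0 <= x -> 1 - e <= Pact P t (ramp (- n%:R)) x.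
Proof.
move=> t0 e0.
have cvg1 : \int[P t x0]_y ramp (- n%:R) y @[n --> \oo] --> (1 : R).
  exact: Rintegral_rampN_cvg1.
move/cvgrPdist_le : cvg1 => /(_ e e0); apply: filterS => n + x x0x.
rewrite ger0_norm ?subr_ge0; last exact: Pact_ramp_le1.
move: (Pact_ramp_nondecreasing t (- n%:R) t0 _ _ x0x); rewrite !PactE; lra.
Qed.

Section feller.
Hypothesis hF : feller P.

(* ramp c = (ramp c - ramp n) + ramp n: the first term is in C_0, and for n large
   the second is uniformly small to the left of x0 + 1. *)
Lemma continuous_Pact_ramp t c : 0 <= t -> continuous (Pact P t (ramp c)).
Proof.
move=> t0 x0; apply/cvgrPdist_le => e e0; have e20 : 0 < e / 2 by rewrite divr_gt0.
near \oo => n.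
have cn : c <= n%:R by near: n; exact: nbhs_infty_ger.
have tail : forall x, x <= x0 + 1 -> Pact P t (ramp n%:R) x <= e / 2.
  by near: n; exact: near_oo_Pact_ramp_le.
have /cvgrPdist_le/(_ _ e20) := (hF.1 t t0 _ (C0_rampB _ _ cn)).1 x0.
apply: filter_app; near=> x; rewrite !Pact_rampB => near_x0.
have /tail tail_x : x <= x0 + 1.
  by apply/ltW; near: x; apply: lt_nbhsl; rewrite ltrDl.
have tail_x0 : Pact P t (ramp n%:R) x0 <= e / 2 by apply: tail; rewrite lerDl.
have := Pact_ramp_ge0 t n%:R x; have := Pact_ramp_ge0 t n%:R x0.
move: near_x0; rewrite !ler_norml => /andP[? ?] ? ?; apply/andP; split; lra.
Unshelve. all: by end_near. Qed.

Lemma Pact_ramp_cvgy t c : 0 <= t -> Pact P t (ramp c) x @[x --> +oo] --> (1 : R).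
Proof.
move=> t0; apply/cvgrPdist_le => e e0; have e20 : 0 < e / 2 by rewrite divr_gt0.
near \oo => n.
have nc : - n%:R <= c.
  by rewrite lerNl; near: n; exact: nbhs_infty_ger.
have head : forall x, 0 <= x -> 1 - e / 2 <= Pact P t (ramp (- n%:R)) x.
  by near: n; exact: near_oo_Pact_rampN_ge.
have /cvgr0Pnorm_le/(_ _ e20) := (hF.1 t t0 _ (C0_rampB _ _ nc)).2.1.
apply: filter_app; near=> x; rewrite Pact_rampB => far.
have /head head_x : 0 <= x by near: x; exact: nbhs_pinfty_ge.
have := Pact_ramp_le1 t c x.
move: far; rewrite !ler_norml => /andP[? ?] ?; apply/andP; split; lra.
Unshelve. all: by end_near. Qed.

Lemma Pact_ramp_cvgNy t c : 0 <= t -> Pact P t (ramp c) x @[x --> -oo] --> (0 : R).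
Proof.
move=> t0; apply/cvgrPdist_le => e e0; have e20 : 0 < e / 2 by rewrite divr_gt0.
near \oo => n.
have cn : c <= n%:R by near: n; exact: nbhs_infty_ger.
have tail : forall x, x <= 0 -> Pact P t (ramp n%:R) x <= e / 2.
  by near: n; exact: near_oo_Pact_ramp_le.
have /cvgr0Pnorm_le/(_ _ e20) := (hF.1 t t0 _ (C0_rampB _ _ cn)).2.2.
apply: filter_app; near=> x; rewrite Pact_rampB => far.
have /tail tail_x : x <= 0 by near: x; exact: nbhs_ninfty_le.
have := Pact_ramp_ge0 t n%:R x; have := Pact_ramp_ge0 t c x.
move: far; rewrite sub0r normrN !ler_norml => /andP[? ?] ? ?; apply/andP; split; lra.
Unshelve. all: by end_near. Qed.

(* The single C_0 function ramp c - ramp (c + 2), equal to 1 at c + 1, suffices: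
   right of c + 1 by monotonicity, left of it because ramp (c + 2) vanishes there. *)
Lemma Pact_ramp_uniform c e : 0 < e ->
  \forall t \near 0^'+, forall x, `|Pact P t (ramp c) x - ramp c x| <= e.
Proof.
move=> e0; have e20 : 0 < e / 2 by rewrite divr_gt0.
have cc2 : c <= c + 2 by rewrite lerDl.
have := hF.2 _ (C0_rampB _ _ cc2) _ e20; apply: filter_app.
near=> t => unif x; rewrite ler_norml.
have t0 : 0 <= t by apply/ltW; near: t; exact: nbhs_right_gt.
have := unif (c + 1); rewrite Pact_rampB ramp_eq1 // ramp_eq0; last by lra.
rewrite ler_norml => /andP[? ?].
have := Pact_ramp_ge0 t (c + 2) (c + 1); have := Pact_ramp_le1 t c (c + 1).
have [c1x|xc1] := leP (c + 1) x.
  rewrite ramp_eq1 //; have := Pact_ramp_le1 t c x.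
  have := Pact_ramp_nondecreasing t c t0 _ _ c1x; move=> ? ? ? ?; apply/andP; split; lra.
have := unif x; rewrite Pact_rampB (ramp_eq0 (c + 2)); last by lra.
have := Pact_ramp_ge0 t (c + 2) x.
have := Pact_ramp_nondecreasing t (c + 2) t0 _ _ (ltW xc1).
rewrite !ler_norml => ? ? /andP[? ?] ? ?; apply/andP; split; lra.
Unshelve. all: by end_near. Qed.

End feller.
End monotone.
End Pact_ramp.

Section Ptilde.
Context {R : realType} {P : R -> R.-pker R ~> R}.

Let measurable_EFin_preimage {A : set (\bar R)} :
  measurable A -> measurable (EFin @^-1` A).
Proof. by move=> mA; rewrite -[_ @^-1` _]setTI; exact: EFin_measurable. Qed.

Lemma measurable_Ptilde t A :
  measurable A -> measurable_fun setT (fun y => Ptilde P t y A).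
Proof.
move=> mA; apply: measurable_fun_ereal => /=.
exact: measurable_kernel (P t) _ (measurable_EFin_preimage mA).
Qed.

Lemma Ptilde0 : markov_semigroup P ->
  forall x A, measurable A -> Ptilde P 0 x A = \d_x A.
Proof.
move=> [P0 _] [r| |] A mA //=.
rewrite /pushEFin /pushforward P0; last exact: measurable_EFin_preimage.
by rewrite !diracE.
Qed.

Lemma Ptilde_semigroup : markov_semigroup P ->
  forall s t, 0 <= s -> 0 <= t -> forall x A, measurable A ->
  Ptilde P (s + t) x A = (\int[Ptilde P s x]_y Ptilde P t y A)%E.
Proof.
move=> [_ Pst] s t s0 t0 x A mA; have mPt := measurable_Ptilde t _ mA.
case: x => [r| |] /=; [|by rewrite integral_dirac// diracT mul1e..].
rewrite /pushEFin /pushforward Pst//; last exact: measurable_EFin_preimage.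
by rewrite (ge0_integral_pushforward (@EFin_measurable R setT) (P s r) measurableT)
  ?preimage_setT.
Qed.

Lemma Ptilde_act_EFin t (f : \bar R -> R) r :
  measurable_fun setT f -> (exists M, forall y : R, `|f y%:E| <= M) ->
  Ptilde_act P t f r%:E = Pact P t (f \o EFin) r.
Proof.
move=> mf fM; rewrite /Ptilde_act /= /pushEFin.
have mEf : measurable_fun setT (EFin \o f) by exact/measurable_EFinP.
have iEf : (P t r).-integrable (EFin @^-1` setT) ((EFin \o f) \o EFin).
  rewrite preimage_setT; apply: bounded_integrable fM; first exact: prob_kernel.
  exact: measurableT_comp mf (@EFin_measurable R setT).
rewrite (integral_pushforward (@EFin_measurable R setT) mEf iEf measurableT).
by rewrite preimage_setT.
Qed.

Lemma Ptilde_act_pinfty t (f : \bar R -> R) :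
  measurable_fun setT f -> Ptilde_act P t f +oo%E = f +oo%E.
Proof.
move=> mf; rewrite /Ptilde_act /= integral_dirac ?diracT ?mul1e//.
exact/measurable_EFinP.
Qed.

Lemma Ptilde_act_ninfty t (f : \bar R -> R) :
  measurable_fun setT f -> Ptilde_act P t f -oo%E = f -oo%E.
Proof.
move=> mf; rewrite /Ptilde_act /= integral_dirac ?diracT ?mul1e//.
exact/measurable_EFinP.
Qed.

End Ptilde.

Section Ptilde_feller.
Context {R : realType} {P : R -> R.-pker R ~> R}.
Hypotheses (hF : feller P) (hM : stoch_monotone P).

Lemma Ptilde_act_EFinE t (f : \bar R -> R) : continuous f -> forall x,
  Ptilde_act P t f x%:E = f -oo%E + (f +oo%E - f -oo%E) * Pact P t (ramp 0) x
                          + Pact P t (fun y => f y%:E - ramp_interp f y) x.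
Proof.
move=> cf x; have mf := measurable_continuous_ereal _ cf.
have bf := bounded_continuous_ereal _ cf.
rewrite (Ptilde_act_EFin t f x mf bf) (PactB t (f \o EFin) (ramp_interp f) x).
- by rewrite Pact_ramp_interp addrC subrK.
- apply: bounded_integrable bf; first exact: prob_kernel.
  exact: measurableT_comp mf (@EFin_measurable R setT).
- by apply: integrable_ramp_interp; exact: prob_kernel.
Qed.

Let cvg_affine {T : Type} {F : set_system T} {FF : Filter F}
    (b c : R) {G H : T -> R} {p q : R} :
  G x @[x --> F] --> p -> H x @[x --> F] --> q ->
  b + c * G x + H x @[x --> F] --> b + c * p + q.
Proof.
by move=> Gp Hq; apply: cvgD Hq; apply: cvgD; [exact: cvg_cst | exact: cvgMl_tmp].
Qed.

Lemma continuous_Ptilde_act t (f : \bar R -> R) : 0 <= t -> continuous f ->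
  continuous (Ptilde_act P t f).
Proof.
move=> t0 cf; have mf := measurable_continuous_ereal _ cf.
have [hcont [hy hNy]] := hF.1 t t0 _ (C0_sub_ramp_interp _ cf).
apply/continuous_erealP; rewrite (funext (Ptilde_act_EFinE t _ cf)).
rewrite Ptilde_act_pinfty// Ptilde_act_ninfty//; split=> [x||].
- exact: cvg_affine _ _ (continuous_Pact_ramp hM hF t 0 t0 x) (hcont x).
- apply: cvg_trans (cvg_affine _ _ (Pact_ramp_cvgy hM hF t 0 t0) hy) _.
  by rewrite mulr1 addr0 subrKC.
- apply: cvg_trans (cvg_affine _ _ (Pact_ramp_cvgNy hM hF t 0 t0) hNy) _.
  by rewrite mulr0 !addr0.
Qed.

Lemma Ptilde_act_uniform (f : \bar R -> R) : continuous f -> forall e, 0 < e ->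
  \forall t \near 0^'+, forall x, `|Ptilde_act P t f x - f x| <= e.
Proof.
move=> cf e e0; have mf := measurable_continuous_ereal _ cf.
set c := f +oo%E - f -oo%E; set h := fun y => f y%:E - ramp_interp f y.
have c1 : 0 < `|c| + 1 by rewrite ltr_wpDl.
have e2 : 0 < e / 2 by rewrite divr_gt0.
have d0 : 0 < e / 2 / (`|c| + 1) by rewrite divr_gt0.
near=> t.
have Uh : forall x, `|Pact P t h x - h x| <= e / 2.
  by near: t; exact: hF.2 _ (C0_sub_ramp_interp _ cf) _ e2.
have Ur : forall x, `|Pact P t (ramp 0) x - ramp 0 x| <= e / 2 / (`|c| + 1).
  by near: t; exact: Pact_ramp_uniform hM hF 0 _ d0.
case=> [r||]; last 2 first.
- by rewrite Ptilde_act_pinfty// subrr normr0 ltW.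
- by rewrite Ptilde_act_ninfty// subrr normr0 ltW.
have -> : Ptilde_act P t f r%:E - f r%:E =
    c * (Pact P t (ramp 0) r - ramp 0 r) + (Pact P t h r - h r).
  by rewrite (Ptilde_act_EFinE t _ cf) /h /ramp_interp -/c; ring.
rewrite (le_trans (ler_normD _ _))// [e in _ <= e]splitr lerD ?Uh// normrM.
rewrite (le_trans (ler_wpM2l _ (Ur r)))//.
rewrite (@le_trans _ _ ((`|c| + 1) * (e / 2 / (`|c| + 1))))//.
  by rewrite ler_wpM2r ?(ltW d0)// lerDl.
by rewrite mulrC divfK// gt_eqF.
Unshelve. all: by end_near. Qed.

End Ptilde_feller.

Theorem proposition2p8 (R : realType) (P : R -> R.-pker R ~> R) :
  markov_semigroup P -> feller P -> stoch_monotone P ->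
  (* (tilde P_t) is a Markov semigroup on \bar R ... *)
  ((forall (x : \bar R) (A : set (\bar R)), measurable A ->
      Ptilde P 0 x A = \d_x A) /\
   (forall s t : R, 0 <= s -> 0 <= t -> forall (x : \bar R) (A : set (\bar R)),
      measurable A ->
      Ptilde P (s + t) x A = (\int[Ptilde P s x]_y Ptilde P t y A)%E)) /\
  (* ... which is Feller on the compact space \bar R *)
  (forall t : R, 0 <= t -> forall f : \bar R -> R, continuous f ->
      continuous (Ptilde_act P t f)) /\
  (forall f : \bar R -> R, continuous f -> forall e : R, 0 < e ->
      \forall t \near 0^'+, forall x : \bar R,
        `|Ptilde_act P t f x - f x| <= e).
Proof.
move=> hS hF hM; split; [split|split].
- exact: Ptilde0.
- exact: Ptilde_semigroup.
- by move=> t t0 f cf; exact: continuous_Ptilde_act.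
- by move=> f cf; exact: Ptilde_act_uniform.
Qed.
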